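(* Let $M>1$, $\tau>0$, $\kappa\in(0,1)$, $T>0$. Let $p\in C^2(\mathbb{R})$ with $p(x)\in(p_{min},1]$ for all $x$ (some $p_{min}\ge0$), and $0\le p'(x)\le c_p(1-p(x))$, $|p''(x)|\le c_p(1-p(x))$ for all $x$, for some $c_p>0$. Let $f_0\ge0$ with $\int_{\mathbb{R}}f_0\,dx=1$, $\int_{\mathbb{R}}pf_0^2\,dx<\infty$, and let $f\ge0$ be a sufficiently regular function on $\mathbb{R}\times[0,T]$ (smooth, with $f,\partial_xf$ decaying as $|x|\to\infty$ so that integrations by parts produce no boundary terms) with $f(\cdot,0)=f_0$ solving \[ \partial_tf+\frac{M-1}{\sqrt\tau}a(t)\partial_x(pf)-\frac{(M-1)^2}{2}\Big(a^2(t)+\frac{1}{M-1}b(t)\Big)\partial^2_{xx}(pf)=0, \] with $a(t)=\int(\kappa-p)f\,dx$, $b(t)=\int pf\,dx\int(1-p)f\,dx$. Set $\alpha(t)=\int_{\mathbb{R}}p f\,dx$ and $\beta(t)=\int_{\mathbb{R}}(1-p)pf\,dx$. Then there is $c_0$ depending only on $c_p$, $\tau$ and $M$ such that \[ |\alpha'(t)|\le c_0\beta(t),\qquad |\beta'(t)|\le c_0\beta(t),\qquad t>0, \] and in particular $\beta(t)\ge\beta(0)e^{-c_0t}$ for $t>0$. *)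

From Stdlib Require Import Reals.
From Coquelicot Require Import Coquelicot.
Open Scope R_scope.

Definition int_R (g : R -> R) : R :=
  RInt_gen g (Rbar_locally m_infty) (Rbar_locally p_infty).

Definition integrable_R (g : R -> R) : Prop :=
  ex_RInt_gen g (Rbar_locally m_infty) (Rbar_locally p_infty).

Definition has_int_R (g : R -> R) (l : R) : Prop :=
  is_RInt_gen g (Rbar_locally m_infty) (Rbar_locally p_infty) l.

Definition vanishes_at_infty (g : R -> R) : Prop :=
  filterlim g (Rbar_locally m_infty) (locally 0) /\
  filterlim g (Rbar_locally p_infty) (locally 0).

Definition cont_on_strip (T : R) (h : R -> R -> R) : Prop :=
  forall x t, 0 <= t <= T ->
    filterlim (fun z : R * R => h (fst z) (snd z))
      (within (fun z : R * R => 0 <= snd z <= T) (locally (x, t)))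
      (locally (h x t)).

(* Testing the equation against a weight [w] and integrating by parts twice (the decay of [f]
   and [f_x] kills the boundary terms) gives
     d/dt int w f = int ((M - 1) / sqrt tau * a w' + (M - 1)^2 / 2 * (a^2 + b / (M - 1)) w'') p f.
   For [w = 1] this is conservation of mass, whence [|a| <= 1] and [0 <= b <= 1]. For [w = p] and
   [w = (1 - p) p], both [|w'|] and [|w''|] are at most [(cp + 2 cp^2) (1 - p)], so the right-hand
   side is at most [c0 * int (1 - p) p f = c0 * beta]; Gronwall's lemma then bounds [beta] from
   below. Differentiating under the improper integrals is justified by the integrable majorant of
   [f], [f_x] and [f_xx]. *)

From Stdlib Require Import Reals Lra Psatz.
From Coquelicot Require Import Coquelicot.
Open Scope R_scope.

Lemma Rabs_mult_le a b A B : Rabs a <= A -> Rabs b <= B -> Rabs (a * b) <= A * B.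
Proof. intros; rewrite Rabs_mult; apply Rmult_le_compat; auto; apply Rabs_pos. Qed.

Lemma Rabs_minus_le a b : Rabs (a - b) <= Rabs a + Rabs b.
Proof. rewrite <- (Rabs_Ropp b); apply Rabs_triang. Qed.

(* Coquelicot's generic rules for [is_derive] and [continuous], specialised to functions
   [R -> R] so that they apply by plain unification. *)
Lemma is_derive_Rmult (f g : R -> R) x df dg : is_derive f x df -> is_derive g x dg ->
  is_derive (fun y => f y * g y) x (df * g x + f x * dg).
Proof. intros; apply (is_derive_mult f g); auto; intros; apply Rmult_comm. Qed.

Lemma is_derive_Rplus (f g : R -> R) x df dg : is_derive f x df -> is_derive g x dg ->
  is_derive (fun y => f y + g y) x (df + dg).
Proof. apply (is_derive_plus f g). Qed.

Lemma is_derive_Rminus (f g : R -> R) x df dg : is_derive f x df -> is_derive g x dg ->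
  is_derive (fun y => f y - g y) x (df - dg).
Proof. apply (is_derive_minus f g). Qed.

Lemma is_derive_Rconst (c x : R) : is_derive (fun _ => c) x 0.
Proof. exact (is_derive_const (K:=R_AbsRing) (V:=R_NormedModule) c x). Qed.

Lemma is_derive_eq (f : R -> R) (x l l' : R) : is_derive f x l -> l = l' -> is_derive f x l'.
Proof. now intros H <-. Qed.

Lemma is_derive_continuous (f : R -> R) x l : is_derive f x l -> continuous f x.
Proof. intros H; apply (ex_derive_continuous (K:=R_AbsRing) (V:=R_NormedModule)); now exists l. Qed.

Lemma continuous_Rmult (f g : R -> R) x : continuous f x -> continuous g x ->
  continuous (fun y => f y * g y) x.
Proof. apply (continuous_mult (K:=R_AbsRing) f g). Qed.

Lemma continuous_Rplus (f g : R -> R) x : continuous f x -> continuous g x ->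
  continuous (fun y => f y + g y) x.
Proof. apply (continuous_plus (V:=R_NormedModule) f g). Qed.

Lemma continuous_Rminus (f g : R -> R) x : continuous f x -> continuous g x ->
  continuous (fun y => f y - g y) x.
Proof. apply (continuous_minus (V:=R_NormedModule) f g). Qed.

Lemma continuous_Rconst (c x : R) : continuous (fun _ : R => c) x.
Proof. apply (continuous_const (U:=R_UniformSpace) (V:=R_UniformSpace)). Qed.

Lemma continuous_R_eps (h : R -> R) y : continuous h y <->
  forall eps, 0 < eps -> exists d, 0 < d /\ forall v, Rabs (v - y) < d -> Rabs (h v - h y) < eps.
Proof.
  split.
  - intros H eps He.
    destruct (H _ (locally_ball (h y) (mkposreal eps He))) as [d Hd].
    exists d; split; [apply cond_pos |]; intros v Hv; exact (Hd v Hv).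
  - intros H P [eps HP]. destruct (H eps (cond_pos eps)) as [d [Hd Hdd]].
    exists (mkposreal d Hd); intros v Hv; apply HP, Hdd, Hv.
Qed.

(** * Improper integrals over the real line *)

Lemma filter_prod_infty_forall (P : R * R -> Prop) : (forall ab, P ab) ->
  filter_prod (Rbar_locally m_infty) (Rbar_locally p_infty) P.
Proof. intros H; exists (fun _ => True) (fun _ => True); try apply filter_true; auto. Qed.

Lemma has_int_R_RInt_lim (k : R -> R) l : has_int_R k l ->
  forall eps : posreal, exists A, forall a b, a < -A -> A < b -> Rabs (RInt k a b - l) < eps.
Proof.
  intros H eps.
  destruct (H _ (locally_ball l eps)) as [Q Q' [M1 HQ] [M2 HQ'] HP].
  exists (Rmax (Rabs M1) (Rabs M2)); intros a b Ha Hb.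
  pose proof (Rmax_l (Rabs M1) (Rabs M2)); pose proof (Rmax_r (Rabs M1) (Rabs M2)).
  pose proof (Rle_abs (- M1)); pose proof (Rle_abs M2); rewrite Rabs_Ropp in *.
  destruct (HP a b) as [y [Hy Hl]]; [apply HQ; lra | apply HQ'; lra |].
  simpl in Hy; now rewrite (is_RInt_unique _ _ _ _ Hy).
Qed.

Lemma has_int_R_of_RInt_lim (k : R -> R) l : (forall a b, ex_RInt k a b) ->
  filterlim (fun ab : R * R => RInt k (fst ab) (snd ab))
    (filter_prod (Rbar_locally m_infty) (Rbar_locally p_infty)) (locally l) ->
  has_int_R k l.
Proof.
  intros Hex H P HP; specialize (H P HP); unfold filtermap in H; unfold filtermapi.
  eapply filter_imp; [| exact H]; intros [a b] Hab; simpl in Hab.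
  exists (RInt k a b); split; [| exact Hab].
  exact (RInt_correct (V:=R_CompleteNormedModule) k a b (Hex a b)).
Qed.

Lemma has_int_R_ex_RInt (G : R -> R) l : has_int_R G l -> forall a b, ex_RInt G a b.
Proof.
  intros H.
  destruct (H _ (filter_true (F := locally l))) as [Q Q' [M1 HQ] [M2 HQ'] HP].
  assert (Hle : forall a b, a <= b -> ex_RInt G a b).
  { intros a b Hab.
    set (a' := Rmin a M1 - 1); set (b' := Rmax b M2 + 1).
    pose proof (Rmin_l a M1); pose proof (Rmin_r a M1).
    pose proof (Rmax_l b M2); pose proof (Rmax_r b M2).
    destruct (HP a' b') as [y [Hy _]]; [apply HQ; unfold a'; lra | apply HQ'; unfold b'; lra |].
    apply (ex_RInt_Chasles_1 G a b b'); [unfold b'; lra |].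
    apply (ex_RInt_Chasles_2 G a' a b'); [unfold a', b'; lra | now exists y]. }
  intros a b; destruct (Rle_lt_dec a b).
  - now apply Hle.
  - apply ex_RInt_swap, Hle; lra.
Qed.

Lemma has_int_R_int_R (k : R -> R) l : has_int_R k l -> int_R k = l.
Proof. intros H; exact (is_RInt_gen_unique (V:=R_CompleteNormedModule) k l H). Qed.

Lemma has_int_R_ext (k k' : R -> R) l : (forall x, k x = k' x) -> has_int_R k l -> has_int_R k' l.
Proof.
  intros E H; apply (is_RInt_gen_ext (V:=R_NormedModule) k k'); [| exact H].
  apply filter_prod_infty_forall; auto.
Qed.

Lemma has_int_R_scal (k : R -> R) l c : has_int_R k l -> has_int_R (fun x => c * k x) (c * l).
Proof. intros H; exact (is_RInt_gen_scal (V:=R_NormedModule) k c l H). Qed.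

Lemma has_int_R_plus (k k' : R -> R) l l' : has_int_R k l -> has_int_R k' l' ->
  has_int_R (fun x => k x + k' x) (l + l').
Proof. intros H H'; exact (is_RInt_gen_plus (V:=R_NormedModule) k k' l l' H H'). Qed.

Lemma has_int_R_minus (k k' : R -> R) l l' : has_int_R k l -> has_int_R k' l' ->
  has_int_R (fun x => k x - k' x) (l - l').
Proof. intros H H'; exact (is_RInt_gen_minus (V:=R_NormedModule) k k' l l' H H'). Qed.

Lemma has_int_R_abs_le (k G : R -> R) lk lG : has_int_R k lk -> has_int_R G lG ->
  (forall x, Rabs (k x) <= G x) -> Rabs lk <= lG.
Proof.
  intros Hk HG H.
  apply (RInt_gen_norm (V:=R_CompleteNormedModule) k G lk lG); [| | exact Hk | exact HG].
  - exists (fun a => a < 0) (fun b => 0 < b); [now exists 0 | now exists 0 |].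
    intros a b; simpl; lra.
  - apply filter_prod_infty_forall; intros; apply H.
Qed.

Lemma has_int_R_ge0 (k : R -> R) l : has_int_R k l -> (forall x, 0 <= k x) -> 0 <= l.
Proof.
  intros Hk H; pose proof (has_int_R_abs_le k k l l Hk Hk) as Habs.
  assert (Rabs l <= l) by (apply Habs; intros x; rewrite Rabs_pos_eq; auto; lra).
  pose proof (Rabs_pos l); lra.
Qed.

Lemma RInt_abs_le_RInt (k G : R -> R) a b : a <= b -> ex_RInt k a b -> ex_RInt G a b ->
  (forall x, a <= x <= b -> Rabs (k x) <= G x) -> Rabs (RInt k a b) <= RInt G a b.
Proof.
  intros Hab Hk HG H; apply (norm_RInt_le k G a b); auto;
    apply (RInt_correct (V:=R_CompleteNormedModule)); auto.
Qed.

Lemma RInt_nested_le (k G : R -> R) a b c d :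
  (forall a b, ex_RInt k a b) -> (forall a b, ex_RInt G a b) ->
  (forall x, Rabs (k x) <= G x) -> a <= c -> c <= d -> d <= b ->
  Rabs (RInt k a b - RInt k c d) <= RInt G a b - RInt G c d.
Proof.
  intros Hk HG H Hac Hcd Hdb.
  rewrite <- (RInt_Chasles k a c b (Hk a c) (Hk c b)).
  rewrite <- (RInt_Chasles k c d b (Hk c d) (Hk d b)).
  rewrite <- (RInt_Chasles G a c b (HG a c) (HG c b)).
  rewrite <- (RInt_Chasles G c d b (HG c d) (HG d b)).
  unfold plus; simpl.
  pose proof (RInt_abs_le_RInt k G a c Hac (Hk a c) (HG a c) (fun x _ => H x)).
  pose proof (RInt_abs_le_RInt k G d b Hdb (Hk d b) (HG d b) (fun x _ => H x)).
  pose proof (Rabs_triang (RInt k a c) (RInt k d b)).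
  replace (RInt k a c + (RInt k c d + RInt k d b) - RInt k c d)
    with (RInt k a c + RInt k d b) by ring.
  lra.
Qed.

Lemma has_int_R_tail_le (k G : R -> R) lk lG : (forall a b, ex_RInt k a b) ->
  has_int_R k lk -> has_int_R G lG -> (forall x, Rabs (k x) <= G x) ->
  forall A, 0 <= A -> Rabs (lk - RInt k (-A) A) <= lG - RInt G (-A) A.
Proof.
  intros Hex Hk HG H A HA.
  pose proof (has_int_R_ex_RInt G lG HG) as HGex.
  apply Rle_plus_epsilon; intros eps Heps.
  destruct (has_int_R_RInt_lim k lk Hk (mkposreal (eps / 2) ltac:(lra))) as [A1 H1].
  destruct (has_int_R_RInt_lim G lG HG (mkposreal (eps / 2) ltac:(lra))) as [A2 H2].
  simpl in H1, H2.
  set (B := Rmax A (Rmax A1 A2) + 1).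
  pose proof (Rmax_l A (Rmax A1 A2)); pose proof (Rmax_r A (Rmax A1 A2)).
  pose proof (Rmax_l A1 A2); pose proof (Rmax_r A1 A2).
  assert (e1 : Rabs (RInt k (-B) B - lk) < eps / 2) by (apply H1; unfold B; lra).
  assert (e2 : Rabs (RInt G (-B) B - lG) < eps / 2) by (apply H2; unfold B; lra).
  pose proof (RInt_nested_le k G (-B) B (-A) A Hex HGex H ltac:(unfold B; lra) ltac:(lra)
    ltac:(unfold B; lra)) as e3.
  pose proof (Rabs_triang (lk - RInt k (-B) B) (RInt k (-B) B - RInt k (-A) A)) as e4.
  rewrite Rabs_minus_sym in e1.
  replace (lk - RInt k (-B) B + (RInt k (-B) B - RInt k (-A) A)) with (lk - RInt k (-A) A) in e4
    by ring.
  apply Rabs_def2 in e2; lra.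
Qed.

Lemma has_int_R_tail_small (G : R -> R) lG : has_int_R G lG -> forall eps, 0 < eps ->
  exists A, 0 <= A /\ lG - RInt G (-A) A < eps.
Proof.
  intros HG eps He.
  destruct (has_int_R_RInt_lim G lG HG (mkposreal eps He)) as [A HA]; simpl in HA.
  pose proof (Rmax_l A 0); pose proof (Rmax_r A 0).
  exists (Rmax A 0 + 1); split; [lra |].
  assert (HB : Rabs (RInt G (- (Rmax A 0 + 1)) (Rmax A 0 + 1) - lG) < eps) by (apply HA; lra).
  apply Rabs_def2 in HB; lra.
Qed.

(* Cauchy criterion along [(a, b) -> (-oo, +oo)]: the partial integrals of [k] oscillate no more
   than those of its majorant. *)
Lemma has_int_R_dominated (k G : R -> R) lG : (forall a b, ex_RInt k a b) -> has_int_R G lG ->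
  (forall x, Rabs (k x) <= G x) -> has_int_R k (int_R k).
Proof.
  intros Hex HG H.
  pose proof (has_int_R_ex_RInt G lG HG) as HGex.
  destruct (proj1 (filterlim_locally_cauchy (U := R_CompleteSpace)
    (F := filter_prod (Rbar_locally m_infty) (Rbar_locally p_infty))
    (fun ab : R * R => RInt k (fst ab) (snd ab)))) as [l Hl].
  - intros eps.
    destruct (has_int_R_RInt_lim G lG HG (mkposreal (eps / 4) ltac:(destruct eps; simpl; lra)))
      as [A HA]; simpl in HA.
    pose proof (Rmax_l A 0); pose proof (Rmax_r A 0); set (A' := Rmax A 0) in *.
    exists (fun ab : R * R => fst ab < -A' /\ A' < snd ab); split.
    { exists (fun a => a < -A') (fun b => A' < b); [now exists (-A') | now exists A' | auto]. }
    assert (Hin : forall a b c d, a < -A' -> A' < b -> c < -A' -> A' < d -> a <= c -> d <= b ->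
      Rabs (RInt k a b - RInt k c d) < eps / 2).
    { intros a b c d Ha Hb Hc Hd Hac Hdb.
      pose proof (RInt_nested_le k G a b c d Hex HGex H Hac ltac:(lra) Hdb).
      assert (Hab : Rabs (RInt G a b - lG) < eps / 4) by (apply HA; lra).
      assert (Hcd : Rabs (RInt G c d - lG) < eps / 4) by (apply HA; lra).
      apply Rabs_def2 in Hab; apply Rabs_def2 in Hcd; lra. }
    intros [a b] [c d] [Ha Hb] [Hc Hd]; simpl in *; change (Rabs (RInt k c d - RInt k a b) < eps).
    assert (Hm1 : Rmax a c < -A') by (apply Rmax_lub_lt; lra).
    assert (Hm2 : A' < Rmin b d) by (apply Rmin_glb_lt; lra).
    pose proof (Hin a b _ _ Ha Hb Hm1 Hm2 (Rmax_l a c) (Rmin_l b d)) as Hab.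
    pose proof (Hin c d _ _ Hc Hd Hm1 Hm2 (Rmax_r a c) (Rmin_r b d)) as Hcd.
    rewrite Rabs_minus_sym in Hab.
    pose proof (Rabs_triang (RInt k c d - RInt k (Rmax a c) (Rmin b d))
                            (RInt k (Rmax a c) (Rmin b d) - RInt k a b)) as Htr.
    replace (RInt k c d - RInt k (Rmax a c) (Rmin b d)
             + (RInt k (Rmax a c) (Rmin b d) - RInt k a b))
      with (RInt k c d - RInt k a b) in Htr by ring.
    lra.
  - pose proof (has_int_R_of_RInt_lim k l Hex Hl) as Hk.
    now rewrite (has_int_R_int_R k l Hk).
Qed.

Lemma has_int_R_dominated_continuous (k G : R -> R) lG : has_int_R G lG ->
  (forall x, continuous k x) -> (forall x, Rabs (k x) <= G x) -> has_int_R k (int_R k).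
Proof.
  intros HG Hc H; apply (has_int_R_dominated k G lG); auto.
  intros a b; apply (ex_RInt_continuous (V:=R_CompleteNormedModule)); intros; apply Hc.
Qed.

Lemma filterlim_0_dominated {T} (F : (T -> Prop) -> Prop) {FF : Filter F} (K u v : T -> R) B :
  0 <= B -> (forall x, Rabs (K x) <= B * (Rabs (u x) + Rabs (v x))) ->
  filterlim u F (locally 0) -> filterlim v F (locally 0) -> filterlim K F (locally 0).
Proof.
  intros HB HK Hu Hv P [eps HP].
  assert (He : 0 < eps / (2 * B + 1)) by (apply Rdiv_lt_0_compat; [apply cond_pos | lra]).
  set (e := mkposreal _ He).
  unfold filtermap; apply (filter_imp (fun x => ball 0 e (u x) /\ ball 0 e (v x))).
  - intros x [h1 h2]; apply HP.
    change (Rabs (u x - 0) < e) in h1; change (Rabs (v x - 0) < e) in h2.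
    change (Rabs (K x - 0) < eps); rewrite Rminus_0_r in *.
    assert (B * (Rabs (u x) + Rabs (v x)) <= B * (2 * e)) by (apply Rmult_le_compat_l; lra).
    assert (B * (2 * e) < eps).
    { simpl; pose proof (cond_pos eps).
      apply Rmult_lt_reg_r with (2 * B + 1); [lra |]; field_simplify; lra. }
    specialize (HK x); lra.
  - apply filter_and; [apply (Hu _ (locally_ball 0 e)) | apply (Hv _ (locally_ball 0 e))].
Qed.

Lemma vanishes_at_infty_dominated (K u v : R -> R) B :
  0 <= B -> (forall x, Rabs (K x) <= B * (Rabs (u x) + Rabs (v x))) ->
  vanishes_at_infty u -> vanishes_at_infty v -> vanishes_at_infty K.
Proof.
  intros HB HK [Hu1 Hu2] [Hv1 Hv2]; split; apply (filterlim_0_dominated _ K u v B); auto.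
Qed.

Lemma has_int_R_derive_vanishing (K k : R -> R) l : (forall x, is_derive K x (k x)) ->
  (forall x, continuous k x) -> vanishes_at_infty K -> has_int_R k l -> l = 0.
Proof.
  intros HK Hc [Hm Hp] Hl.
  assert (HD : forall x, Derive K x = k x)
    by (intros x; exact (is_derive_unique K x (k x) (HK x))).
  assert (H0 : has_int_R k (0 - 0)).
  { apply (has_int_R_ext (Derive K)); [exact HD |].
    apply (is_RInt_gen_Derive K 0 0); [| | exact Hm | exact Hp];
      apply filter_prod_infty_forall; intros ab x _.
    - now exists (k x).
    - apply (continuous_ext (T:=R_UniformSpace) (U:=R_UniformSpace) k); [| apply Hc].
      intros; now rewrite HD. }
  rewrite <- (has_int_R_int_R k l Hl), (has_int_R_int_R k _ H0); ring.
Qed.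

(** * Integrals depending on a parameter *)

Lemma continuity_2d_pt_continuous_fst (F : R -> R -> R) x y :
  continuity_2d_pt F x y -> continuous (fun u => F u y) x.
Proof.
  intros H; apply continuous_R_eps; intros eps He.
  destruct (H (mkposreal eps He)) as [d Hd].
  exists d; split; [apply cond_pos |]; intros u Hu; apply Hd; auto.
  rewrite Rminus_eq_0, Rabs_R0; apply cond_pos.
Qed.

Lemma continuity_2d_pt_equicontinuous (F : R -> R -> R) t0 :
  (forall x, continuity_2d_pt F x t0) ->
  forall A eps, 0 < eps -> exists d, 0 < d /\
    forall s x, Rabs (s - t0) < d -> -A <= x <= A -> Rabs (F x s - F x t0) <= eps.
Proof.
  intros HF A eps He.
  destruct (uniform_continuity_2d_1d F (-A) A t0 (fun x _ => HF x) (mkposreal eps He)) as [d Hd].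
  exists d; split; [apply cond_pos |]; intros s x Hs Hx.
  pose proof (cond_pos d); apply Rabs_def2 in Hs.
  apply Rlt_le, (Hd x t0 x s); auto; try lra.
  rewrite Rminus_eq_0, Rabs_R0; apply cond_pos.
Qed.

Lemma continuity_2d_pt_fst (w : R -> R) x y : continuous w x ->
  continuity_2d_pt (fun u _ => w u) x y.
Proof.
  intros H; apply continuity_1d_2d_pt_comp; [now apply continuity_pt_filterlim |].
  apply continuity_2d_pt_id1.
Qed.

Lemma continuity_2d_pt_snd (h : R -> R) x y : continuous h y ->
  continuity_2d_pt (fun _ v => h v) x y.
Proof.
  intros H; apply continuity_1d_2d_pt_comp; [now apply continuity_pt_filterlim |].
  apply continuity_2d_pt_id2.
Qed.

(* Dominated convergence for a family converging uniformly on compact sets: cut the line at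
   [[-A, A]], where the majorant leaves a tail of mass [< eps / 4]. *)
Lemma int_R_param_lim (K : R -> R -> R) (k0 G : R -> R) lG (U : R -> Prop) s0 :
  has_int_R G lG ->
  (forall x, continuous k0 x) -> (forall x, Rabs (k0 x) <= G x) ->
  (forall s x, U s -> continuous (K s) x /\ Rabs (K s x) <= G x) ->
  (forall A eps, 0 < eps -> exists d, 0 < d /\
     forall s x, U s -> Rabs (s - s0) < d -> -A <= x <= A -> Rabs (K s x - k0 x) <= eps) ->
  forall eps, 0 < eps -> exists d, 0 < d /\
    forall s, U s -> Rabs (s - s0) < d -> Rabs (int_R (K s) - int_R k0) < eps.
Proof.
  intros HG Hk0c Hk0 HK Hunif eps He.
  assert (Hloc : forall k : R -> R, (forall x, continuous k x) -> forall a b, ex_RInt k a b).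
  { intros k Hk a b; apply (ex_RInt_continuous (V:=R_CompleteNormedModule)); intros; apply Hk. }
  destruct (has_int_R_tail_small G lG HG (eps / 4) ltac:(lra)) as [A [HA0 HA]].
  set (eta := eps / (4 * (2 * A + 1))).
  assert (Heta : 0 < eta) by (unfold eta; apply Rdiv_lt_0_compat; lra).
  destruct (Hunif A eta Heta) as [d [Hd Hdd]].
  exists d; split; auto; intros s Us Hs.
  assert (HKc : forall x, continuous (K s) x) by (intros x; apply (HK s x Us)).
  assert (HKd : forall x, Rabs (K s x) <= G x) by (intros x; apply (HK s x Us)).
  pose proof (has_int_R_tail_le (K s) G _ lG (Hloc _ HKc)
    (has_int_R_dominated_continuous _ G lG HG HKc HKd) HG HKd A HA0) as T1.
  pose proof (has_int_R_tail_le k0 G _ lG (Hloc _ Hk0c)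
    (has_int_R_dominated_continuous _ G lG HG Hk0c Hk0) HG Hk0 A HA0) as T2.
  assert (Hmid : Rabs (RInt (K s) (-A) A - RInt k0 (-A) A) <= (A - - A) * eta).
  { rewrite <- (RInt_minus (V:=R_CompleteNormedModule)); try apply Hloc; auto.
    apply abs_RInt_le_const; [lra | |].
    - apply (ex_RInt_minus (V:=R_CompleteNormedModule)); apply Hloc; auto.
    - intros x Hx; apply Hdd; auto. }
  assert (Heta4 : (A - - A) * eta < eps / 4).
  { unfold eta; apply Rmult_lt_reg_r with (4 * (2 * A + 1)); [lra |].
    field_simplify; lra. }
  pose proof (Rabs_triang (int_R (K s) - RInt (K s) (-A) A)
                          (RInt (K s) (-A) A - RInt k0 (-A) A)) as Tr1.
  pose proof (Rabs_triang (int_R (K s) - RInt (K s) (-A) A + (RInt (K s) (-A) A - RInt k0 (-A) A))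
                          (RInt k0 (-A) A - int_R k0)) as Tr2.
  replace (int_R (K s) - RInt (K s) (-A) A + (RInt (K s) (-A) A - RInt k0 (-A) A)
           + (RInt k0 (-A) A - int_R k0)) with (int_R (K s) - int_R k0) in Tr2 by ring.
  rewrite Rabs_minus_sym in T2; lra.
Qed.

Lemma continuous_int_R_param (H : R -> R -> R) (G : R -> R) lG t0 : has_int_R G lG ->
  (forall x s, continuity_2d_pt H x s) -> (forall x s, Rabs (H x s) <= G x) ->
  continuous (fun s => int_R (fun x => H x s)) t0.
Proof.
  intros HG Hc Hd; apply continuous_R_eps; intros eps He.
  destruct (int_R_param_lim (fun s x => H x s) (fun x => H x t0) G lG (fun _ => True) t0 HG)
    with (eps := eps) as [d [Hd' Hdd]]; auto using continuity_2d_pt_continuous_fst.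
  - intros A eps' He'.
    destruct (continuity_2d_pt_equicontinuous H t0 (fun x => Hc x t0) A eps' He')
      as [d [Hd' Hdd]].
    exists d; split; auto.
  - exists d; split; auto.
Qed.

Lemma difference_quotient_MVT (F dF : R -> R) t0 r h :
  (forall s, Rabs (s - t0) < r -> is_derive F s (dF s)) -> h <> 0 -> Rabs h < r ->
  exists c, Rabs (c - t0) <= Rabs h /\ (F (t0 + h) - F t0) / h = dF c.
Proof.
  intros Hder Hh0 Hh.
  destruct (MVT_cor4 F dF t0 (Rabs h)) with (b := t0 + h) as [c [Hc1 Hc2]].
  - intros c Hc; apply Hder; lra.
  - replace (t0 + h - t0) with h by ring; lra.
  - exists c; replace (t0 + h - t0) with h in Hc1, Hc2 by ring; split; auto.
    rewrite Hc1; field; auto.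
Qed.

Lemma int_R_difference_quotient (k1 k0 : R -> R) h : h <> 0 ->
  has_int_R k1 (int_R k1) -> has_int_R k0 (int_R k0) ->
  int_R (fun x => (k1 x - k0 x) / h) = (int_R k1 - int_R k0) / h.
Proof.
  intros Hh H1 H0; apply has_int_R_int_R.
  apply (has_int_R_ext (fun x => / h * (k1 x - k0 x))); [intros; unfold Rdiv; ring |].
  replace ((int_R k1 - int_R k0) / h) with (/ h * (int_R k1 - int_R k0)) by (unfold Rdiv; ring).
  now apply has_int_R_scal, has_int_R_minus.
Qed.

Lemma is_derive_int_R_param (H Ht : R -> R -> R) (G : R -> R) lG t0 r :
  has_int_R G lG -> 0 < r ->
  (forall x s, Rabs (s - t0) < r -> is_derive (fun s => H x s) s (Ht x s)) ->
  (forall x s, Rabs (s - t0) < r -> continuous (fun x => H x s) x) ->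
  (forall x s, Rabs (s - t0) < r -> Rabs (H x s) <= G x /\ Rabs (Ht x s) <= G x) ->
  (forall x, continuity_2d_pt Ht x t0) ->
  is_derive (fun s => int_R (fun x => H x s)) t0 (int_R (fun x => Ht x t0)).
Proof.
  intros HG Hr Hder Hc Hdom Hcont.
  assert (Ht0 : Rabs (t0 - t0) < r) by (rewrite Rminus_eq_0, Rabs_R0; auto).
  assert (Hint : forall s, Rabs (s - t0) < r ->
    has_int_R (fun x => H x s) (int_R (fun x => H x s))).
  { intros s Hs; apply (has_int_R_dominated_continuous _ G lG HG); intros x;
      [apply Hc | apply Hdom]; auto. }
  pose proof (fun x => difference_quotient_MVT (fun s => H x s) (Ht x) t0 r) as MV.
  apply is_derive_Reals; intros eps He.
  destruct (int_R_param_lim (fun h x => (H x (t0 + h) - H x t0) / h) (fun x => Ht x t0) G lG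
    (fun h => h <> 0 /\ Rabs h < r) 0 HG) with (eps := eps) as [d [Hd Hdd]]; auto.
  - intros x; exact (continuity_2d_pt_continuous_fst Ht x t0 (Hcont x)).
  - intros x; apply Hdom; auto.
  - intros h x [Hh0 Hh]; split.
    + apply continuous_Rmult; [| apply continuous_Rconst].
      apply continuous_Rminus; apply Hc; [replace (t0 + h - t0) with h by ring |]; auto.
    + destruct (MV x h) as [c [Hc1 ->]]; auto; apply Hdom; lra.
  - intros A eps' He'.
    destruct (continuity_2d_pt_equicontinuous Ht t0 Hcont A eps' He') as [d [Hd Hdd]].
    exists d; split; auto; intros h x [Hh0 Hh] Hhd Hx; rewrite Rminus_0_r in Hhd.
    destruct (MV x h) as [c [Hc1 ->]]; auto; apply Hdd; auto; lra.
  - exists (mkposreal (Rmin d r) (Rmin_glb_lt _ _ _ Hd Hr)); simpl; intros h Hh0 Hh.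
    pose proof (Rmin_l d r); pose proof (Rmin_r d r).
    rewrite <- int_R_difference_quotient; auto.
    + apply Hdd; [split |]; auto; rewrite ?Rminus_0_r; lra.
    + apply Hint; replace (t0 + h - t0) with h by ring; lra.
Qed.

(** * Functions of time *)

Lemma le_of_derive_nonneg (phi dphi : R -> R) a b : a <= b ->
  (forall x, a < x < b -> is_derive phi x (dphi x)) -> (forall x, a < x < b -> 0 <= dphi x) ->
  (forall x, a <= x <= b -> continuous phi x) -> phi a <= phi b.
Proof.
  intros Hab Hd Hpos Hc.
  (* The mean value point may be an endpoint, where [dphi] is not controlled. *)
  destruct (MVT_gen phi a b (fun x => Rmax 0 (dphi x))) as [c [_ E]].
  - rewrite Rmin_left, Rmax_right by lra; intros x Hx.
    rewrite Rmax_right by (apply Hpos; lra); apply Hd; lra.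
  - rewrite Rmin_left, Rmax_right by lra; intros x Hx.
    apply continuity_pt_filterlim, Hc; lra.
  - pose proof (Rmax_l 0 (dphi c)); nra.
Qed.

Lemma eq_of_derive_0 (phi : R -> R) a b : a <= b ->
  (forall x, a < x < b -> is_derive phi x 0) -> (forall x, a <= x <= b -> continuous phi x) ->
  phi a = phi b.
Proof.
  intros Hab Hd Hc.
  destruct (MVT_gen phi a b (fun _ => 0)) as [c [_ E]]; [| | lra].
  - rewrite Rmin_left, Rmax_right by lra; intros x Hx; apply Hd; lra.
  - rewrite Rmin_left, Rmax_right by lra; intros x Hx; apply continuity_pt_filterlim, Hc; lra.
Qed.

Lemma gronwall_lower (phi : R -> R) c t : 0 <= t ->
  (forall x, 0 < x < t -> exists d, is_derive phi x d /\ - c * phi x <= d) ->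
  (forall x, 0 <= x <= t -> continuous phi x) -> phi 0 * exp (- c * t) <= phi t.
Proof.
  intros Ht Hd Hc.
  assert (Hexp : forall x, is_derive (fun v => exp (c * v)) x (c * exp (c * x)))
    by (intros x; auto_derive; auto; ring).
  assert (Hmono : phi 0 * exp (c * 0) <= phi t * exp (c * t)).
  { apply (le_of_derive_nonneg (fun x => phi x * exp (c * x))
      (fun x => Derive phi x * exp (c * x) + phi x * (c * exp (c * x)))); auto.
    - intros x Hx; destruct (Hd x Hx) as [d [Hder _]]; rewrite (is_derive_unique _ _ _ Hder).
      apply (is_derive_Rmult phi (fun v => exp (c * v))); [exact Hder | apply Hexp].
    - intros x Hx; destruct (Hd x Hx) as [d [Hder Hle]]; rewrite (is_derive_unique _ _ _ Hder).
      pose proof (exp_pos (c * x)).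
      replace (d * exp (c * x) + phi x * (c * exp (c * x))) with ((d + c * phi x) * exp (c * x))
        by ring.
      apply Rmult_le_pos; lra.
    - intros x Hx; apply (continuous_Rmult phi (fun v => exp (c * v))); [apply Hc; auto |].
      exact (is_derive_continuous _ _ _ (Hexp x)). }
  rewrite Rmult_0_r, exp_0, Rmult_1_r in Hmono.
  apply Rmult_le_compat_r with (r := exp (- c * t)) in Hmono; [| apply Rlt_le, exp_pos].
  rewrite Rmult_assoc, <- exp_plus in Hmono.
  replace (c * t + - c * t) with 0 in Hmono by ring.
  now rewrite exp_0, Rmult_1_r in Hmono.
Qed.

(* [clamp T] is the identity on [[0, T]] and constant outside: composing with it turns a
   function of time defined on [[0, T]] into one defined on the whole line. *)
Definition clamp (T v : R) : R := Rmax 0 (Rmin T v).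

Lemma clamp_id T v : 0 <= v <= T -> clamp T v = v.
Proof. intros Hv; unfold clamp; rewrite Rmin_right, Rmax_right; lra. Qed.

Lemma clamp_range T v : 0 <= T -> 0 <= clamp T v <= T.
Proof.
  intros HT; unfold clamp; split; [apply Rmax_l |].
  apply Rmax_lub; [exact HT | apply Rmin_l].
Qed.

Lemma clamp_lipschitz T v w : 0 <= T -> Rabs (clamp T v - clamp T w) <= Rabs (v - w).
Proof.
  intros HT; unfold clamp, Rmax, Rmin.
  repeat destruct Rle_dec; unfold Rabs; repeat destruct Rcase_abs; lra.
Qed.

Lemma is_derive_clamp T (h : R -> R) x l : 0 < x < T -> is_derive h x l ->
  is_derive (fun v => h (clamp T v)) x l.
Proof.
  intros Hx H; apply (is_derive_ext_loc (K:=R_AbsRing) (V:=R_NormedModule) h); auto.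
  assert (Hd : 0 < Rmin x (T - x)) by (apply Rmin_glb_lt; lra).
  exists (mkposreal _ Hd); intros y Hy; change (Rabs (y - x) < Rmin x (T - x)) in Hy.
  pose proof (Rmin_l x (T - x)); pose proof (Rmin_r x (T - x)); apply Rabs_def2 in Hy.
  rewrite clamp_id; lra.
Qed.

Lemma continuity_2d_pt_clamp T (h : R -> R -> R) x s : 0 <= T -> cont_on_strip T h ->
  continuity_2d_pt (fun u v => h u (clamp T v)) x s.
Proof.
  intros HT H eps.
  pose proof (clamp_range T s HT) as Hs.
  destruct (H x (clamp T s) Hs _ (locally_ball (h x (clamp T s)) eps)) as [d Hd].
  exists d; intros u v Hu Hv; apply (Hd (u, clamp T v)).
  - split; [exact Hu |]; change (Rabs (clamp T v - clamp T s) < d).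
    pose proof (clamp_lipschitz T v s HT); lra.
  - now apply clamp_range.
Qed.

(** * Weighted masses of a solution *)

(* [(M - 1) / sqrt tau] and [(M - 1) ^ 2 / 2 * (1 + / (M - 1))] bound the drift and diffusion
   coefficients once [|a| <= 1] and [0 <= b <= 1]; [cp + 2 * cp ^ 2] bounds the first two
   derivatives of [p] and of [(1 - p) p] by multiples of [1 - p]. *)
Definition decay_rate (M tau cp : R) : R :=
  ((M - 1) / sqrt tau + (M - 1) ^ 2 / 2 * (1 + / (M - 1))) * (cp + 2 * cp ^ 2).

Section Model.

Variables (M tau cp kappa T : R) (p dp d2p : R -> R) (f fx fxx ft : R -> R -> R).
Variables (g : R -> R) (lg : R).

Hypothesis M_gt1 : 1 < M.
Hypothesis kappa_range : 0 < kappa < 1.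
Hypothesis tau_gt0 : 0 < tau.
Hypothesis cp_ge0 : 0 <= cp.
Hypothesis T_gt0 : 0 < T.
Hypothesis p_derive : forall x, is_derive p x (dp x).
Hypothesis dp_derive : forall x, is_derive dp x (d2p x).
Hypothesis d2p_continuous : forall x, continuous d2p x.
Hypothesis p_gt0 : forall x, 0 < p x.
Hypothesis p_le1 : forall x, p x <= 1.
Hypothesis dp_bound : forall x, 0 <= dp x <= cp * (1 - p x).
Hypothesis d2p_bound : forall x, Rabs (d2p x) <= cp * (1 - p x).
Hypothesis f_derive_x : forall x t, 0 <= t <= T -> is_derive (fun y => f y t) x (fx x t).
Hypothesis fx_derive_x : forall x t, 0 <= t <= T -> is_derive (fun y => fx y t) x (fxx x t).
Hypothesis f_derive_t : forall x t, 0 < t < T -> is_derive (fun s => f x s) t (ft x t).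
Hypothesis f_continuous : cont_on_strip T f.
Hypothesis fx_continuous : cont_on_strip T fx.
Hypothesis fxx_continuous : cont_on_strip T fxx.
Hypothesis g_int : has_int_R g lg.
Hypothesis g_dominates : forall x t, 0 <= t <= T ->
  Rabs (f x t) <= g x /\ Rabs (fx x t) <= g x /\ Rabs (fxx x t) <= g x.
Hypothesis f_vanishes : forall t, 0 <= t <= T ->
  vanishes_at_infty (fun x => f x t) /\ vanishes_at_infty (fun x => fx x t).
Hypothesis f_ge0 : forall x t, 0 <= t <= T -> 0 <= f x t.
Hypothesis f_mass0 : has_int_R (fun x => f x 0) 1.

(* [alpha = wmass p] and [beta = wmass ((1 - p) p)]. *)
Definition wmass (w : R -> R) t := int_R (fun x => w x * f x t).
Definition coef_a t := wmass (fun x => kappa - p x) t.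
Definition coef_b t := wmass p t * wmass (fun x => 1 - p x) t.
Definition drift := (M - 1) / sqrt tau.
Definition diffusion t := (M - 1) ^ 2 / 2 * (coef_a t ^ 2 + / (M - 1) * coef_b t).

Hypothesis f_equation : forall x t, 0 < t < T ->
  ft x t + (M - 1) / sqrt tau * coef_a t * Derive (fun y => p y * f y t) x
  - (M - 1) ^ 2 / 2 * (coef_a t ^ 2 + / (M - 1) * coef_b t)
      * Derive_n (fun y => p y * f y t) 2 x = 0.

Definition dx_pf x t := dp x * f x t + p x * fx x t.
Definition dxx_pf x t := d2p x * f x t + 2 * (dp x * fx x t) + p x * fxx x t.
Definition rhs x t := diffusion t * dxx_pf x t - drift * coef_a t * dx_pf x t.

Lemma drift_gt0 : 0 < drift.
Proof. apply Rdiv_lt_0_compat; [lra | apply sqrt_lt_R0; lra]. Qed.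

Lemma p_continuous x : continuous p x.
Proof. exact (is_derive_continuous _ _ _ (p_derive x)). Qed.

Lemma dp_continuous x : continuous dp x.
Proof. exact (is_derive_continuous _ _ _ (dp_derive x)). Qed.

Lemma Rabs_p_le1 x : Rabs (p x) <= 1.
Proof. pose proof (p_gt0 x); pose proof (p_le1 x); rewrite Rabs_pos_eq; lra. Qed.

Lemma Rabs_dp_le x : Rabs (dp x) <= cp.
Proof. pose proof (dp_bound x); pose proof (p_gt0 x); rewrite Rabs_pos_eq by lra; nra. Qed.

Lemma Rabs_d2p_le x : Rabs (d2p x) <= cp.
Proof. pose proof (d2p_bound x); pose proof (p_gt0 x); nra. Qed.

Lemma f_continuous_x x t : 0 <= t <= T -> continuous (fun y => f y t) x.
Proof. intros Ht; exact (is_derive_continuous _ _ _ (f_derive_x x t Ht)). Qed.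

Lemma continuity_2d_f x s : continuity_2d_pt (fun u v => f u (clamp T v)) x s.
Proof. apply continuity_2d_pt_clamp; auto; lra. Qed.

Lemma is_derive_pf x t : 0 <= t <= T -> is_derive (fun y => p y * f y t) x (dx_pf x t).
Proof. intros Ht; apply (is_derive_Rmult p (fun y => f y t)); auto. Qed.

Lemma is_derive_dx_pf x t : 0 <= t <= T -> is_derive (fun y => dx_pf y t) x (dxx_pf x t).
Proof.
  intros Ht; unfold dx_pf; eapply is_derive_eq.
  - apply (is_derive_Rplus (fun y => dp y * f y t) (fun y => p y * fx y t)).
    + apply (is_derive_Rmult dp (fun y => f y t)); auto.
    + apply (is_derive_Rmult p (fun y => fx y t)); auto.
  - unfold dxx_pf; ring.
Qed.

Lemma Derive_pf x t : 0 <= t <= T -> Derive (fun y => p y * f y t) x = dx_pf x t.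
Proof. intros Ht; apply is_derive_unique, is_derive_pf, Ht. Qed.

Lemma Derive_n_pf x t : 0 <= t <= T -> Derive_n (fun y => p y * f y t) 2 x = dxx_pf x t.
Proof.
  intros Ht; simpl.
  rewrite (Derive_ext (fun z => Derive (fun y => p y * f y t) z) (fun y => dx_pf y t) x).
  - apply is_derive_unique, is_derive_dx_pf, Ht.
  - intros y; apply Derive_pf, Ht.
Qed.

Lemma ft_eq_rhs x t : 0 < t < T -> ft x t = rhs x t.
Proof.
  intros Ht; pose proof (f_equation x t Ht) as E.
  rewrite Derive_pf, Derive_n_pf in E by lra.
  unfold rhs, diffusion, drift; lra.
Qed.

Lemma Rabs_dx_pf_le x t : Rabs (dx_pf x t) <= cp * Rabs (f x t) + Rabs (fx x t).
Proof.
  unfold dx_pf; eapply Rle_trans; [apply Rabs_triang |].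
  pose proof (Rabs_mult_le _ _ _ _ (Rabs_dp_le x) (Rle_refl (Rabs (f x t)))).
  pose proof (Rabs_mult_le _ _ _ _ (Rabs_p_le1 x) (Rle_refl (Rabs (fx x t)))).
  lra.
Qed.

Lemma Rabs_dxx_pf_le x t :
  Rabs (dxx_pf x t) <= cp * Rabs (f x t) + 2 * cp * Rabs (fx x t) + Rabs (fxx x t).
Proof.
  unfold dxx_pf; eapply Rle_trans; [apply Rabs_triang |].
  eapply Rle_trans; [apply Rplus_le_compat_r, Rabs_triang |].
  pose proof (Rabs_mult_le _ _ _ _ (Rabs_d2p_le x) (Rle_refl (Rabs (f x t)))).
  pose proof (Rabs_mult_le _ _ _ _ (Rabs_dp_le x) (Rle_refl (Rabs (fx x t)))).
  pose proof (Rabs_mult_le _ _ _ _ (Rabs_p_le1 x) (Rle_refl (Rabs (fxx x t)))).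
  rewrite (Rabs_mult 2), (Rabs_pos_eq 2) by lra.
  lra.
Qed.

Lemma wmass_has_int (w : R -> R) B t : (forall x, continuous w x) -> (forall x, Rabs (w x) <= B) ->
  0 <= t <= T -> has_int_R (fun x => w x * f x t) (wmass w t).
Proof.
  intros Hc Hb Ht; apply (has_int_R_dominated_continuous _ (fun x => B * g x) (B * lg)).
  - now apply has_int_R_scal.
  - intros x; apply continuous_Rmult; auto; now apply f_continuous_x.
  - intros x; apply Rabs_mult_le; auto; apply g_dominates; auto.
Qed.

Lemma wmass_abs_le (w : R -> R) t : (forall x, continuous w x) -> (forall x, Rabs (w x) <= 1) ->
  0 <= t <= T -> Rabs (wmass w t) <= lg.
Proof.
  intros Hc Hb Ht; apply (has_int_R_abs_le _ g _ _ (wmass_has_int w 1 t Hc Hb Ht) g_int).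
  intros x; rewrite <- (Rmult_1_l (g x)); apply Rabs_mult_le; auto; apply g_dominates; auto.
Qed.

Lemma wmass_clamp_continuous (w : R -> R) B y : (forall x, continuous w x) ->
  (forall x, Rabs (w x) <= B) -> continuous (fun v => wmass w (clamp T v)) y.
Proof.
  intros Hc Hb.
  apply (continuous_int_R_param (fun x v => w x * f x (clamp T v)) (fun x => B * g x) (B * lg)).
  - now apply has_int_R_scal.
  - intros x s; apply continuity_2d_pt_mult; [now apply continuity_2d_pt_fst |].
    apply continuity_2d_f.
  - intros x s; apply Rabs_mult_le; auto; apply g_dominates, clamp_range; lra.
Qed.

Lemma Rabs_kappa_p_le1 x : Rabs (kappa - p x) <= 1.
Proof. pose proof (p_gt0 x); pose proof (p_le1 x); apply Rabs_le; lra. Qed.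

Lemma Rabs_1_p_le1 x : Rabs (1 - p x) <= 1.
Proof. pose proof (p_gt0 x); pose proof (p_le1 x); apply Rabs_le; lra. Qed.

Lemma Rabs_pq_le1 x : Rabs ((1 - p x) * p x) <= 1.
Proof. pose proof (p_gt0 x); pose proof (p_le1 x); apply Rabs_le; nra. Qed.

Lemma continuous_kappa_p x : continuous (fun y => kappa - p y) x.
Proof. apply continuous_Rminus; [apply continuous_Rconst | apply p_continuous]. Qed.

Lemma continuous_1_p x : continuous (fun y => 1 - p y) x.
Proof. apply continuous_Rminus; [apply continuous_Rconst | apply p_continuous]. Qed.

Lemma continuous_pq x : continuous (fun y => (1 - p y) * p y) x.
Proof.
  apply (continuous_Rmult (fun y => 1 - p y) p); [apply continuous_1_p | apply p_continuous].
Qed.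

Lemma coef_a_clamp_continuous y : continuous (fun v => coef_a (clamp T v)) y.
Proof.
  apply (wmass_clamp_continuous _ 1); [apply continuous_kappa_p | apply Rabs_kappa_p_le1].
Qed.

Lemma diffusion_clamp_continuous y : continuous (fun v => diffusion (clamp T v)) y.
Proof.
  unfold diffusion, coef_b.
  apply continuous_Rmult; [apply continuous_Rconst |].
  apply continuous_Rplus; [| apply continuous_Rmult; [apply continuous_Rconst |]].
  - apply (continuous_ext (T:=R_UniformSpace) (U:=R_UniformSpace)
      (fun v => coef_a (clamp T v) * coef_a (clamp T v))); [intros; simpl; ring |].
    apply continuous_Rmult; now apply coef_a_clamp_continuous.
  - apply continuous_Rmult.
    + apply (wmass_clamp_continuous _ 1); [apply p_continuous | apply Rabs_p_le1].
    + apply (wmass_clamp_continuous _ 1); [apply continuous_1_p | apply Rabs_1_p_le1].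
Qed.

(* Crude bounds through the majorant [g]; mass conservation, which gives the sharp ones, is itself
   derived from the derivative formula that needs these. *)
Lemma coefs_bounded : exists C, 0 <= C /\
  forall t, 0 <= t <= T -> Rabs (coef_a t) <= C /\ Rabs (diffusion t) <= C.
Proof.
  assert (Ha : forall t, 0 <= t <= T -> Rabs (coef_a t) <= lg).
  { intros t Ht; apply wmass_abs_le; auto; [apply continuous_kappa_p | apply Rabs_kappa_p_le1]. }
  assert (Hb : forall t, 0 <= t <= T -> Rabs (coef_b t) <= lg * lg).
  { intros t Ht; apply Rabs_mult_le; apply wmass_abs_le; auto.
    - apply p_continuous.
    - apply Rabs_p_le1.
    - apply continuous_1_p.
    - apply Rabs_1_p_le1. }
  assert (Hlg : 0 <= lg) by (pose proof (Ha 0 ltac:(lra)); pose proof (Rabs_pos (coef_a 0)); lra).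
  assert (HM : 0 <= (M - 1) ^ 2 / 2) by (pose proof (pow2_ge_0 (M - 1)); lra).
  assert (HM' : 0 < / (M - 1)) by (apply Rinv_0_lt_compat; lra).
  set (Cd := (M - 1) ^ 2 / 2 * (lg * lg + / (M - 1) * (lg * lg))).
  assert (HCd : 0 <= Cd).
  { pose proof (Rmult_le_pos lg lg Hlg Hlg).
    apply Rmult_le_pos; [lra | apply Rplus_le_le_0_compat; [| apply Rmult_le_pos]; lra]. }
  exists (lg + Cd); split; [lra |]; intros t Ht; split; [pose proof (Ha t Ht); lra |].
  enough (Rabs (diffusion t) <= Cd) by lra.
  unfold diffusion, Cd; rewrite Rabs_mult, (Rabs_pos_eq ((M - 1) ^ 2 / 2)) by exact HM.
  apply Rmult_le_compat_l; [exact HM |].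
  eapply Rle_trans; [apply Rabs_triang |]; apply Rplus_le_compat.
  - rewrite <- RPow_abs; pose proof (Ha t Ht); pose proof (Rabs_pos (coef_a t)); simpl; nra.
  - rewrite Rabs_mult, (Rabs_pos_eq (/ (M - 1))) by lra.
    apply Rmult_le_compat_l; [lra | apply Hb, Ht].
Qed.

Lemma continuity_2d_rhs x s : continuity_2d_pt (fun u v => rhs u (clamp T v)) x s.
Proof.
  unfold rhs, dxx_pf, dx_pf.
  assert (Hf : forall h, cont_on_strip T h -> continuity_2d_pt (fun u v => h u (clamp T v)) x s)
    by (intros; apply continuity_2d_pt_clamp; auto; lra).
  assert (Hc : forall w, (forall x, continuous w x) -> continuity_2d_pt (fun u _ => w u) x s)
    by (intros; now apply continuity_2d_pt_fst).
  assert (Ha := continuity_2d_pt_snd _ x s (coef_a_clamp_continuous s)).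
  assert (Hd := continuity_2d_pt_snd _ x s (diffusion_clamp_continuous s)).
  repeat first [ exact Ha | exact Hd | apply continuity_2d_pt_minus | apply continuity_2d_pt_plus
               | apply continuity_2d_pt_mult | apply continuity_2d_pt_const | apply Hf; assumption
               | apply Hc; [apply d2p_continuous] | apply Hc; [apply dp_continuous]
               | apply Hc; [apply p_continuous] ].
Qed.

Lemma rhs_continuous_x x t : 0 <= t <= T -> continuous (fun y => rhs y t) x.
Proof.
  intros Ht; rewrite <- (clamp_id T t Ht).
  exact (continuity_2d_pt_continuous_fst (fun u v => rhs u (clamp T v)) x t
    (continuity_2d_rhs x t)).
Qed.

Lemma rhs_dominated : exists C, 0 <= C /\
  forall x t, 0 <= t <= T -> Rabs (rhs x t) <= C * g x.
Proof.
  destruct coefs_bounded as [C [HC HCb]].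
  pose proof drift_gt0 as Hdr.
  exists (C * (3 * cp + 1) + drift * C * (cp + 1)); split.
  { apply Rplus_le_le_0_compat; apply Rmult_le_pos; try apply Rmult_le_pos; lra. }
  intros x t Ht.
  destruct (HCb t Ht) as [Ha Hd]; destruct (g_dominates x t Ht) as [H1 [H2 H3]].
  assert (E2 : Rabs (dxx_pf x t) <= (3 * cp + 1) * g x)
    by (pose proof (Rabs_dxx_pf_le x t); nra).
  assert (E1 : Rabs (dx_pf x t) <= (cp + 1) * g x) by (pose proof (Rabs_dx_pf_le x t); nra).
  unfold rhs; eapply Rle_trans; [apply Rabs_minus_le |].
  pose proof (Rabs_mult_le _ _ _ _ Hd E2) as B2.
  assert (Hda : Rabs (drift * coef_a t) <= drift * C)
    by (rewrite Rabs_mult, (Rabs_pos_eq drift) by lra; apply Rmult_le_compat_l; lra).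
  pose proof (Rabs_mult_le _ _ _ _ Hda E1) as B1.
  lra.
Qed.

Lemma is_derive_wmass_rhs (w : R -> R) B t0 : (forall x, continuous w x) ->
  (forall x, Rabs (w x) <= B) -> 0 < t0 < T ->
  is_derive (wmass w) t0 (int_R (fun x => w x * rhs x t0)).
Proof.
  intros Hc Hb Ht0.
  destruct rhs_dominated as [C [HC HCb]].
  assert (HB : 0 <= B) by (pose proof (Hb 0); pose proof (Rabs_pos (w 0)); lra).
  set (r := Rmin t0 (T - t0)).
  assert (Hr : 0 < r) by (apply Rmin_glb_lt; lra).
  assert (Hrs : forall s, Rabs (s - t0) < r -> 0 < s < T).
  { intros s Hs; apply Rabs_def2 in Hs.
    pose proof (Rmin_l t0 (T - t0)); pose proof (Rmin_r t0 (T - t0)); unfold r in Hs; lra. }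
  replace (int_R (fun x => w x * rhs x t0)) with (int_R (fun x => w x * rhs x (clamp T t0)))
    by (now rewrite clamp_id by lra).
  apply (is_derive_int_R_param (fun x s => w x * f x s) (fun x s => w x * rhs x (clamp T s))
    (fun x => B * (1 + C) * g x) (B * (1 + C) * lg) t0 r); auto.
  - now apply has_int_R_scal.
  - intros x s Hs; specialize (Hrs s Hs).
    eapply is_derive_eq.
    { apply is_derive_Rmult; [apply is_derive_Rconst | apply f_derive_t, Hrs]. }
    rewrite clamp_id, <- ft_eq_rhs by lra; ring.
  - intros x s Hs; apply continuous_Rmult; auto; apply f_continuous_x; specialize (Hrs s Hs); lra.
  - intros x s Hs; pose proof (Hrs s Hs).
    destruct (g_dominates x s ltac:(lra)) as [Hf _].
    pose proof (HCb x (clamp T s) (clamp_range T s ltac:(lra))) as Hr'.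
    assert (Hg : 0 <= g x) by (pose proof (Rabs_pos (f x s)); lra).
    pose proof (Rmult_le_pos C (g x) HC Hg).
    replace (B * (1 + C) * g x) with (B * (g x + C * g x)) by ring.
    split; apply Rabs_mult_le; auto; lra.
  - intros x; apply continuity_2d_pt_mult; [now apply continuity_2d_pt_fst |].
    apply continuity_2d_rhs.
Qed.

Lemma weighted_rhs_has_int (w : R -> R) B t : 0 <= t <= T ->
  (forall x, continuous w x) -> (forall x, Rabs (w x) <= B) ->
  has_int_R (fun x => w x * rhs x t) (int_R (fun x => w x * rhs x t)).
Proof.
  intros Ht Hc Hb; destruct rhs_dominated as [C [HC HCb]].
  apply (has_int_R_dominated_continuous _ (fun x => B * C * g x) (B * C * lg)).
  - now apply has_int_R_scal.
  - intros x; apply (continuous_Rmult w (fun y => rhs y t)); [apply Hc |].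
    now apply rhs_continuous_x.
  - intros x; rewrite Rmult_assoc; apply Rabs_mult_le; [apply Hb | apply HCb, Ht].
Qed.

Definition flux (v1 v2 : R -> R) x t :=
  (drift * coef_a t * v1 x + diffusion t * v2 x) * (p x * f x t).

Lemma flux_continuous (v1 v2 : R -> R) x t : 0 <= t <= T ->
  continuous v1 x -> continuous v2 x -> continuous (fun y => flux v1 v2 y t) x.
Proof.
  intros Ht Hc1 Hc2; unfold flux.
  apply (continuous_Rmult (fun y => drift * coef_a t * v1 y + diffusion t * v2 y)
    (fun y => p y * f y t)).
  - apply (continuous_Rplus (fun y => drift * coef_a t * v1 y) (fun y => diffusion t * v2 y)).
    + apply (continuous_Rmult (fun _ => drift * coef_a t)); [apply continuous_Rconst | exact Hc1].
    + apply (continuous_Rmult (fun _ => diffusion t)); [apply continuous_Rconst | exact Hc2].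
  - apply (continuous_Rmult p (fun y => f y t)); [apply p_continuous | now apply f_continuous_x].
Qed.

Lemma flux_has_int (v1 v2 : R -> R) B t : 0 <= t <= T ->
  (forall x, continuous v1 x) -> (forall x, continuous v2 x) ->
  (forall x, Rabs (v1 x) <= B /\ Rabs (v2 x) <= B) ->
  has_int_R (fun x => flux v1 v2 x t) (int_R (fun x => flux v1 v2 x t)).
Proof.
  intros Ht Hc1 Hc2 Hb.
  set (C := (Rabs (drift * coef_a t) * B + Rabs (diffusion t) * B)).
  apply (has_int_R_dominated_continuous _ (fun x => C * g x) (C * lg)).
  - now apply has_int_R_scal.
  - intros x; now apply flux_continuous.
  - intros x; unfold flux, C; destruct (Hb x) as [Hb1 Hb2].
    apply Rabs_mult_le.
    + eapply Rle_trans; [apply Rabs_triang |].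
      rewrite (Rabs_mult (drift * coef_a t) (v1 x)), (Rabs_mult (diffusion t) (v2 x)).
      apply Rplus_le_compat; apply Rmult_le_compat_l; auto; apply Rabs_pos.
    + rewrite <- (Rmult_1_l (g x)); apply Rabs_mult_le; [apply Rabs_p_le1 | apply g_dominates, Ht].
Qed.

(* The primitive of [w * rhs - flux w' w''] produced by integrating by parts twice. *)
Definition potential (w w1 : R -> R) x t :=
  diffusion t * (w x * dx_pf x t - w1 x * (p x * f x t))
  - drift * coef_a t * (w x * (p x * f x t)).

Lemma is_derive_potential (w w1 w2 : R -> R) x t : 0 <= t <= T ->
  (forall x, is_derive w x (w1 x)) -> (forall x, is_derive w1 x (w2 x)) ->
  is_derive (fun y => potential w w1 y t) x (w x * rhs x t - flux w1 w2 x t).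
Proof.
  intros Ht Hw Hw1; unfold potential.
  set (A := drift * coef_a t); set (D := diffusion t).
  eapply is_derive_eq.
  - apply (is_derive_Rminus (fun y => D * (w y * dx_pf y t - w1 y * (p y * f y t)))
                            (fun y => A * (w y * (p y * f y t)))).
    + apply (is_derive_Rmult (fun _ => D)); [apply is_derive_Rconst |].
      apply (is_derive_Rminus (fun y => w y * dx_pf y t) (fun y => w1 y * (p y * f y t))).
      * apply (is_derive_Rmult w (fun y => dx_pf y t)); [apply Hw | now apply is_derive_dx_pf].
      * apply (is_derive_Rmult w1 (fun y => p y * f y t)); [apply Hw1 | now apply is_derive_pf].
    + apply (is_derive_Rmult (fun _ => A)); [apply is_derive_Rconst |].
      apply (is_derive_Rmult w (fun y => p y * f y t)); [apply Hw | now apply is_derive_pf].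
  - unfold rhs, flux, dx_pf; fold A D; ring.
Qed.

Lemma potential_vanishes (w w1 : R -> R) B t : 0 <= t <= T ->
  (forall x, Rabs (w x) <= B /\ Rabs (w1 x) <= B) ->
  vanishes_at_infty (fun x => potential w w1 x t).
Proof.
  intros Ht Hb.
  assert (HB : 0 <= B) by (destruct (Hb 0) as [H _]; pose proof (Rabs_pos (w 0)); lra).
  set (A := drift * coef_a t); set (D := diffusion t).
  destruct (f_vanishes t Ht) as [Hf Hfx].
  apply (vanishes_at_infty_dominated _ (fun x => f x t) (fun x => fx x t)
    (Rabs D * (B * (cp + 1) + B) + Rabs A * B)); auto.
  { apply Rplus_le_le_0_compat; apply Rmult_le_pos; try apply Rabs_pos; nra. }
  intros x; destruct (Hb x) as [Hb0 Hb1].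
  set (S := Rabs (f x t) + Rabs (fx x t)).
  pose proof (Rabs_pos (f x t)); pose proof (Rabs_pos (fx x t)).
  assert (Hpf : Rabs (p x * f x t) <= 1 * S)
    by (apply Rabs_mult_le; [apply Rabs_p_le1 | unfold S; lra]).
  assert (Hdx : Rabs (dx_pf x t) <= (cp + 1) * S)
    by (pose proof (Rabs_dx_pf_le x t); unfold S; nra).
  assert (H1 : Rabs (w x * dx_pf x t - w1 x * (p x * f x t)) <= B * ((cp + 1) * S) + B * (1 * S)).
  { eapply Rle_trans; [apply Rabs_minus_le |].
    apply Rplus_le_compat; apply Rabs_mult_le; auto. }
  assert (H2 : Rabs (w x * (p x * f x t)) <= B * (1 * S)) by (apply Rabs_mult_le; auto).
  apply (Rmult_le_compat_l (Rabs D)) in H1; [| apply Rabs_pos].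
  apply (Rmult_le_compat_l (Rabs A)) in H2; [| apply Rabs_pos].
  unfold potential; fold A D.
  eapply Rle_trans; [apply Rabs_minus_le |]; rewrite (Rabs_mult D), (Rabs_mult A).
  lra.
Qed.

Lemma int_R_weighted_rhs (w w1 w2 : R -> R) B t : 0 <= t <= T ->
  (forall x, is_derive w x (w1 x)) -> (forall x, is_derive w1 x (w2 x)) ->
  (forall x, continuous w2 x) ->
  (forall x, Rabs (w x) <= B /\ Rabs (w1 x) <= B /\ Rabs (w2 x) <= B) ->
  int_R (fun x => w x * rhs x t) = int_R (fun x => flux w1 w2 x t).
Proof.
  intros Ht Hw Hw1 Hw2c Hb.
  assert (Hwc : forall x, continuous w x) by (intros x; exact (is_derive_continuous _ _ _ (Hw x))).
  assert (Hw1c : forall x, continuous w1 x)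
    by (intros x; exact (is_derive_continuous _ _ _ (Hw1 x))).
  assert (Hdiff := has_int_R_minus _ _ _ _
    (weighted_rhs_has_int w B t Ht Hwc (fun x => proj1 (Hb x)))
    (flux_has_int w1 w2 B t Ht Hw1c Hw2c (fun x => proj2 (Hb x)))).
  apply (has_int_R_derive_vanishing (fun x => potential w w1 x t)) in Hdiff; [lra | | |].
  - intros x; now apply is_derive_potential.
  - intros x; apply (continuous_Rminus (fun y => w y * rhs y t) (fun y => flux w1 w2 y t)).
    + apply (continuous_Rmult w (fun y => rhs y t)); [apply Hwc | now apply rhs_continuous_x].
    + now apply flux_continuous.
  - apply (potential_vanishes w w1 B t Ht); intros x; split; apply Hb.
Qed.

Lemma is_derive_wmass (w w1 w2 : R -> R) B t : 0 < t < T ->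
  (forall x, is_derive w x (w1 x)) -> (forall x, is_derive w1 x (w2 x)) ->
  (forall x, continuous w2 x) ->
  (forall x, Rabs (w x) <= B /\ Rabs (w1 x) <= B /\ Rabs (w2 x) <= B) ->
  is_derive (wmass w) t (int_R (fun x => flux w1 w2 x t)).
Proof.
  intros Ht Hw Hw1 Hw2c Hb.
  rewrite <- (int_R_weighted_rhs w w1 w2 B t) by (auto; lra).
  apply (is_derive_wmass_rhs w B); auto.
  - intros x; exact (is_derive_continuous _ _ _ (Hw x)).
  - intros x; apply Hb.
Qed.

Lemma mass_conserved t : 0 <= t <= T -> wmass (fun _ => 1) t = 1.
Proof.
  intros Ht.
  assert (Hc : forall y, continuous (fun v => wmass (fun _ => 1) (clamp T v)) y).
  { intros y; apply (wmass_clamp_continuous _ 1); [intros; apply continuous_Rconst |].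
    intros; rewrite Rabs_R1; lra. }
  assert (H0 : wmass (fun _ => 1) 0 = 1).
  { apply has_int_R_int_R; apply (has_int_R_ext (fun x => f x 0)); [intros; ring | exact f_mass0]. }
  pose proof (eq_of_derive_0 (fun v => wmass (fun _ => 1) (clamp T v)) 0 t) as E.
  cbv beta in E; rewrite !clamp_id in E by lra; rewrite <- E; auto; [lra |].
  intros s Hs; apply is_derive_clamp; [lra |].
  eapply is_derive_eq.
  - apply (is_derive_wmass (fun _ => 1) (fun _ => 0) (fun _ => 0) 1); [lra | | | |].
    + intros; apply is_derive_Rconst.
    + intros; apply is_derive_Rconst.
    + intros; apply continuous_Rconst.
    + intros; rewrite Rabs_R1, Rabs_R0; lra.
  - pose proof (has_int_R_scal g lg 0 g_int) as H; rewrite Rmult_0_l in H.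
    apply has_int_R_int_R, (has_int_R_ext (fun x => 0 * g x)); [| exact H].
    intros; unfold flux; ring.
Qed.

Lemma wmass_nonneg (w : R -> R) t : 0 <= t <= T -> (forall x, continuous w x) ->
  (forall x, 0 <= w x <= 1) -> 0 <= wmass w t.
Proof.
  intros Ht Hc Hw; apply (has_int_R_ge0 (fun x => w x * f x t)).
  - apply (wmass_has_int w 1); auto; intros x; rewrite Rabs_pos_eq; apply Hw.
  - intros x; apply Rmult_le_pos; [apply Hw | now apply f_ge0].
Qed.

Lemma coef_a_abs_le1 t : 0 <= t <= T -> Rabs (coef_a t) <= 1.
Proof.
  intros Ht; rewrite <- (mass_conserved t Ht).
  apply (has_int_R_abs_le (fun x => (kappa - p x) * f x t) (fun x => 1 * f x t)).
  - apply (wmass_has_int (fun x => kappa - p x) 1); auto;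
      [apply continuous_kappa_p | apply Rabs_kappa_p_le1].
  - apply (wmass_has_int (fun _ => 1) 1); auto; [intros; apply continuous_Rconst |].
    intros; rewrite Rabs_R1; lra.
  - intros x; rewrite Rabs_mult, (Rabs_pos_eq (f x t)) by (now apply f_ge0).
    apply Rmult_le_compat_r; [now apply f_ge0 | apply Rabs_kappa_p_le1].
Qed.

Lemma coef_b_range t : 0 <= t <= T -> 0 <= coef_b t <= 1.
Proof.
  intros Ht; unfold coef_b.
  assert (Hp : 0 <= wmass p t).
  { apply wmass_nonneg; auto; [apply p_continuous |].
    intros x; pose proof (p_gt0 x); split; [lra | apply p_le1]. }
  assert (Hq : 0 <= wmass (fun x => 1 - p x) t).
  { apply wmass_nonneg; auto; [apply continuous_1_p |].
    intros x; pose proof (p_gt0 x); pose proof (p_le1 x); lra. }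
  assert (Hsum : wmass p t + wmass (fun x => 1 - p x) t = 1).
  { transitivity (wmass (fun _ => 1) t); [symmetry | apply mass_conserved, Ht].
    apply has_int_R_int_R.
    apply (has_int_R_ext (fun x => p x * f x t + (1 - p x) * f x t)); [intros; ring |].
    apply has_int_R_plus.
    - apply (wmass_has_int p 1); auto; [apply p_continuous | apply Rabs_p_le1].
    - apply (wmass_has_int (fun x => 1 - p x) 1); auto;
        [apply continuous_1_p | apply Rabs_1_p_le1]. }
  split; [now apply Rmult_le_pos | nra].
Qed.

Lemma diffusion_abs_le t : 0 <= t <= T ->
  Rabs (diffusion t) <= (M - 1) ^ 2 / 2 * (1 + / (M - 1)).
Proof.
  intros Ht; unfold diffusion.
  pose proof (coef_a_abs_le1 t Ht) as Ha; pose proof (coef_b_range t Ht) as Hb.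
  assert (HM : 0 < / (M - 1)) by (apply Rinv_0_lt_compat; lra).
  assert (Ha2 : 0 <= coef_a t ^ 2 <= 1).
  { rewrite <- pow2_abs; pose proof (Rabs_pos (coef_a t)); simpl; nra. }
  rewrite Rabs_mult, Rabs_pos_eq by (pose proof (pow2_ge_0 (M - 1)); lra).
  apply Rmult_le_compat_l; [pose proof (pow2_ge_0 (M - 1)); lra |].
  rewrite Rabs_pos_eq by nra; nra.
Qed.

Lemma flux_abs_le (v1 v2 : R -> R) Kc t : 0 <= t <= T -> 0 <= Kc ->
  (forall x, continuous v1 x) -> (forall x, continuous v2 x) ->
  (forall x, Rabs (v1 x) <= Kc * (1 - p x)) -> (forall x, Rabs (v2 x) <= Kc * (1 - p x)) ->
  Rabs (int_R (fun x => flux v1 v2 x t))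
  <= (drift + (M - 1) ^ 2 / 2 * (1 + / (M - 1))) * Kc * wmass (fun x => (1 - p x) * p x) t.
Proof.
  intros Ht HKc Hc1 Hc2 Hb1 Hb2.
  pose proof (diffusion_abs_le t Ht) as HD.
  set (Cd := (M - 1) ^ 2 / 2 * (1 + / (M - 1))) in *.
  set (c := (drift + Cd) * Kc).
  pose proof drift_gt0 as Hdr; pose proof (Rabs_pos (diffusion t)).
  assert (Hc : 0 <= c) by (unfold c; apply Rmult_le_pos; lra).
  apply (has_int_R_abs_le (fun x => flux v1 v2 x t) (fun x => c * ((1 - p x) * p x * f x t))).
  - apply (flux_has_int v1 v2 Kc t Ht Hc1 Hc2); intros x.
    pose proof (p_gt0 x); pose proof (Hb1 x); pose proof (Hb2 x); split; nra.
  - apply has_int_R_scal, (wmass_has_int (fun x => (1 - p x) * p x) 1); auto.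
    + apply continuous_pq.
    + apply Rabs_pq_le1.
  - intros x; pose proof (p_gt0 x); pose proof (p_le1 x); pose proof (f_ge0 x t Ht).
    unfold flux; rewrite Rabs_mult, (Rabs_pos_eq (p x * f x t)) by nra.
    assert (Rabs (drift * coef_a t * v1 x + diffusion t * v2 x) <= c * (1 - p x)).
    { pose proof (Rabs_mult_le _ _ _ _ (coef_a_abs_le1 t Ht) (Hb1 x)) as Hav.
      pose proof (Rabs_mult_le _ _ _ _ HD (Hb2 x)) as HDv.
      apply (Rmult_le_compat_l drift) in Hav; [| lra].
      eapply Rle_trans; [apply Rabs_triang |].
      rewrite Rmult_assoc, (Rabs_mult drift), (Rabs_pos_eq drift) by lra.
      unfold c; lra. }
    replace (c * ((1 - p x) * p x * f x t)) with (c * (1 - p x) * (p x * f x t)) by ring.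
    apply Rmult_le_compat_r; nra.
Qed.

Lemma is_derive_pq x : is_derive (fun y => (1 - p y) * p y) x (dp x * (1 - 2 * p x)).
Proof.
  eapply is_derive_eq.
  - apply (is_derive_Rmult (fun y => 1 - p y) p); [| apply p_derive].
    apply (is_derive_Rminus (fun _ => 1) p); [apply is_derive_Rconst | apply p_derive].
  - ring.
Qed.

Lemma is_derive_dpq x :
  is_derive (fun y => dp y * (1 - 2 * p y)) x (d2p x * (1 - 2 * p x) - 2 * (dp x * dp x)).
Proof.
  eapply is_derive_eq.
  - apply (is_derive_Rmult dp (fun y => 1 - 2 * p y)); [apply dp_derive |].
    apply (is_derive_Rminus (fun _ => 1) (fun y => 2 * p y)); [apply is_derive_Rconst |].
    apply (is_derive_Rmult (fun _ => 2) p); [apply is_derive_Rconst | apply p_derive].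
  - ring.
Qed.

Lemma Rabs_dpq_le x : Rabs (dp x * (1 - 2 * p x)) <= (cp + 2 * cp ^ 2) * (1 - p x).
Proof.
  pose proof (p_gt0 x); pose proof (p_le1 x); pose proof (dp_bound x).
  assert (Rabs (1 - 2 * p x) <= 1) by (apply Rabs_le; lra).
  eapply Rle_trans; [apply (Rabs_mult_le _ _ (cp * (1 - p x)) 1); auto; rewrite Rabs_pos_eq; lra |].
  pose proof (pow2_ge_0 cp); nra.
Qed.

Lemma Rabs_d2pq_le x :
  Rabs (d2p x * (1 - 2 * p x) - 2 * (dp x * dp x)) <= (cp + 2 * cp ^ 2) * (1 - p x).
Proof.
  pose proof (p_gt0 x); pose proof (p_le1 x); pose proof (dp_bound x).
  assert (H12p : Rabs (1 - 2 * p x) <= 1) by (apply Rabs_le; lra).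
  pose proof (Rabs_mult_le _ _ _ _ (d2p_bound x) H12p).
  assert (Hdp2 : 0 <= dp x ^ 2 <= cp ^ 2 * (1 - p x)).
  { split; [apply pow2_ge_0 |].
    assert (dp x ^ 2 <= (cp * (1 - p x)) ^ 2) by (apply pow_incr; lra).
    pose proof (pow2_ge_0 cp); nra. }
  eapply Rle_trans; [apply Rabs_minus_le |].
  rewrite (Rabs_pos_eq (2 * (dp x * dp x))) by nra; simpl in Hdp2; lra.
Qed.

Lemma alpha_derive_le t : 0 < t < T -> exists da, is_derive (wmass p) t da /\
  Rabs da <= decay_rate M tau cp * wmass (fun x => (1 - p x) * p x) t.
Proof.
  intros Ht.
  assert (HKc : forall x, cp * (1 - p x) <= (cp + 2 * cp ^ 2) * (1 - p x)).
  { intros x; pose proof (p_le1 x); pose proof (pow2_ge_0 cp).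
    apply Rmult_le_compat_r; lra. }
  eexists; split.
  - apply (is_derive_wmass p dp d2p (cp + 1)); auto.
    intros x; pose proof (Rabs_p_le1 x); pose proof (Rabs_dp_le x); pose proof (Rabs_d2p_le x); lra.
  - apply flux_abs_le; [lra | pose proof (pow2_ge_0 cp); lra | apply dp_continuous | auto | |].
    + intros x; rewrite Rabs_pos_eq by apply dp_bound.
      eapply Rle_trans; [apply dp_bound | apply HKc].
    + intros x; eapply Rle_trans; [apply d2p_bound | apply HKc].
Qed.

Lemma beta_derive_le t : 0 < t < T ->
  exists db, is_derive (wmass (fun x => (1 - p x) * p x)) t db /\
  Rabs db <= decay_rate M tau cp * wmass (fun x => (1 - p x) * p x) t.
Proof.
  intros Ht.
  set (Kc := cp + 2 * cp ^ 2).
  assert (HKc : forall x, Kc * (1 - p x) <= 1 + Kc).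
  { intros x; pose proof (p_gt0 x); pose proof (p_le1 x); pose proof (pow2_ge_0 cp).
    unfold Kc; nra. }
  assert (Hc2 : forall x, continuous (fun y => d2p y * (1 - 2 * p y) - 2 * (dp y * dp y)) x).
  { intros x.
    apply (continuous_Rminus (fun y => d2p y * (1 - 2 * p y)) (fun y => 2 * (dp y * dp y))).
    - apply (continuous_Rmult d2p (fun y => 1 - 2 * p y)); [apply d2p_continuous |].
      apply (continuous_Rminus (fun _ => 1) (fun y => 2 * p y)); [apply continuous_Rconst |].
      apply (continuous_Rmult (fun _ => 2) p); [apply continuous_Rconst | apply p_continuous].
    - apply (continuous_Rmult (fun _ => 2) (fun y => dp y * dp y)); [apply continuous_Rconst |].
      apply continuous_Rmult; apply dp_continuous. }
  eexists; split.
  - apply (is_derive_wmass _ _ _ (1 + Kc) t Ht is_derive_pq is_derive_dpq Hc2).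
    intros x; pose proof (p_gt0 x); pose proof (p_le1 x).
    pose proof (Rabs_dpq_le x); pose proof (Rabs_d2pq_le x); pose proof (HKc x); unfold Kc in *.
    repeat split; [rewrite Rabs_pos_eq; nra | lra | lra].
  - apply flux_abs_le; [lra | unfold Kc; pose proof (pow2_ge_0 cp); lra | | exact Hc2 | |].
    + intros x; exact (is_derive_continuous _ _ _ (is_derive_dpq x)).
    + apply Rabs_dpq_le.
    + apply Rabs_d2pq_le.
Qed.

Lemma beta_lower t : 0 < t <= T -> wmass (fun x => (1 - p x) * p x) t
  >= wmass (fun x => (1 - p x) * p x) 0 * exp (- decay_rate M tau cp * t).
Proof.
  intros Ht; apply Rle_ge.
  pose proof (gronwall_lower (fun v => wmass (fun x => (1 - p x) * p x) (clamp T v))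
    (decay_rate M tau cp) t) as G; cbv beta in G.
  rewrite !clamp_id in G by lra; apply G; [lra | |].
  - intros s Hs; destruct (beta_derive_le s ltac:(lra)) as [d [Hd Hle]].
    exists d; split; [now apply is_derive_clamp; [lra |] |].
    rewrite clamp_id by lra; apply Rabs_le_between in Hle; lra.
  - intros s _; apply (wmass_clamp_continuous _ 1).
    + apply continuous_pq.
    + apply Rabs_pq_le1.
Qed.

Lemma model_estimates :
  (forall t, 0 < t < T ->
     (exists da, is_derive (wmass p) t da /\
        Rabs da <= decay_rate M tau cp * wmass (fun x => (1 - p x) * p x) t) /\
     (exists db, is_derive (wmass (fun x => (1 - p x) * p x)) t db /\
        Rabs db <= decay_rate M tau cp * wmass (fun x => (1 - p x) * p x) t)) /\
  (forall t, 0 < t <= T -> wmass (fun x => (1 - p x) * p x) t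
     >= wmass (fun x => (1 - p x) * p x) 0 * exp (- decay_rate M tau cp * t)).
Proof.
  split; [intros t Ht; split; [apply alpha_derive_le | apply beta_derive_le] | apply beta_lower];
    auto.
Qed.

End Model.

Theorem lemma4p2 (M tau cp : R) (HM : 1 < M) (Htau : 0 < tau) (Hcp : 0 < cp) :
  exists c0 : R,
  forall (kappa T pmin : R) (p dp d2p f0 : R -> R) (f fx fxx ft : R -> R -> R),
    0 < kappa < 1 -> 0 < T ->
    (* p in C^2(R) with derivatives dp, d2p *)
    (forall x, is_derive p x (dp x)) ->
    (forall x, is_derive dp x (d2p x)) ->
    (forall x, continuous d2p x) ->
    0 <= pmin ->
    (forall x, pmin < p x <= 1) ->
    (forall x, 0 <= dp x <= cp * (1 - p x)) ->
    (forall x, Rabs (d2p x) <= cp * (1 - p x)) ->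
    (* initial datum *)
    (forall x, 0 <= f0 x) ->
    has_int_R f0 1 ->
    integrable_R (fun x => p x * f0 x ^ 2) ->
    (* regularity of f on R x [0,T]: partial derivatives fx, fxx, ft *)
    (forall x t, 0 <= t <= T -> is_derive (fun y => f y t) x (fx x t)) ->
    (forall x t, 0 <= t <= T -> is_derive (fun y => fx y t) x (fxx x t)) ->
    (forall x t, 0 < t < T -> is_derive (fun s => f x s) t (ft x t)) ->
    cont_on_strip T f -> cont_on_strip T fx -> cont_on_strip T fxx ->
    (* decay / integrability: no boundary terms in integrations by parts *)
    (exists g : R -> R, integrable_R g /\
       forall x t, 0 <= t <= T ->
         Rabs (f x t) <= g x /\ Rabs (fx x t) <= g x /\ Rabs (fxx x t) <= g x) ->
    (forall t, 0 <= t <= T ->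
       vanishes_at_infty (fun x => f x t) /\ vanishes_at_infty (fun x => fx x t)) ->
    (forall x t, 0 <= t <= T -> 0 <= f x t) ->
    (forall x, f x 0 = f0 x) ->
    (* the equation *)
    (let a := fun t => int_R (fun x => (kappa - p x) * f x t) in
     let b := fun t => int_R (fun x => p x * f x t) * int_R (fun x => (1 - p x) * f x t) in
     forall x t, 0 < t < T ->
       ft x t + (M - 1) / sqrt tau * a t * Derive (fun y => p y * f y t) x
       - (M - 1) ^ 2 / 2 * (a t ^ 2 + / (M - 1) * b t)
           * Derive_n (fun y => p y * f y t) 2 x = 0) ->
    let alpha := fun t => int_R (fun x => p x * f x t) in
    let beta := fun t => int_R (fun x => (1 - p x) * p x * f x t) in
    (forall t, 0 < t < T ->
       (exists da, is_derive alpha t da /\ Rabs da <= c0 * beta t) /\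
       (exists db, is_derive beta t db /\ Rabs db <= c0 * beta t)) /\
    (forall t, 0 < t <= T -> beta t >= beta 0 * exp (- c0 * t)).
Proof.
  exists (decay_rate M tau cp).
  intros kappa T pmin p dp d2p f0 f fx fxx ft Hk HT Hp Hdp Hd2p Hpmin Hpr Hdpb Hd2pb _ Hf0 _
    Hfx Hfxx Hft Hcf Hcfx Hcfxx [g [[lg Hg] Hgb]] Hvan Hfpos Hinit Heq alpha beta.
  assert (Hcp0 : 0 <= cp) by lra.
  assert (Hp0 : forall x, 0 < p x) by (intros x; destruct (Hpr x); lra).
  assert (Hp1 : forall x, p x <= 1) by (intros x; apply Hpr).
  assert (Hmass : has_int_R (fun x => f x 0) 1)
    by (apply (has_int_R_ext f0); [intros x; now rewrite Hinit | exact Hf0]).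
  exact (model_estimates M tau cp kappa T p dp d2p f fx fxx ft g lg HM Hk Htau Hcp0 HT Hp Hdp Hd2p
    Hp0 Hp1 Hdpb Hd2pb Hfx Hfxx Hft Hcf Hcfx Hcfxx Hg Hgb Hvan Hfpos Hmass Heq).
Qed.
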